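(* Let $\gamma_1,\ldots,\gamma_m\in\mathbb R^{m-n}$ be such that $L=\mathbb Z\langle\gamma_1,\ldots,\gamma_m\rangle$ is a lattice of rank $m-n$, let $\delta\in\mathbb R^{m-n}$, and let $$\mathcal Z_{\Gamma,\delta}=\Bigl\{\mathbf z\in\mathbb C^m\colon\sum_{k=1}^m\gamma_{jk}|z_k|^2=\delta_j,\ 1\le j\le m-n\Bigr\},$$ on which the torus $T_\Gamma=\{(e^{2\pi i\langle\gamma_1,\varphi\rangle},\ldots,e^{2\pi i\langle\gamma_m,\varphi\rangle})\colon\varphi\in\mathbb R^{m-n}\}\cong\mathbb R^{m-n}/L^*$ acts coordinatewise. Then the stabiliser subgroup of $\mathbf z\in\mathcal Z_{\Gamma,\delta}$ under the action of $T_\Gamma$ is $L^*_{\mathbf z}/L^*$. Furthermore, if $\mathcal Z_{\Gamma,\delta}$ is nondegenerate, then all these stabilisers are finite, i.e. the action of $T_\Gamma$ on $\mathcal Z_{\Gamma,\delta}$ is almost free.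
   Context: Here $\gamma_{jk}$ denotes the $j$th coordinate of $\gamma_k$. For a subgroup $M\subset\mathbb R^{m-n}$, $M^*=\{\lambda^*\in\mathbb R^{m-n}\colon\langle\lambda^*,\lambda\rangle\in\mathbb Z\text{ for all }\lambda\in M\}$; $L_{\mathbf z}=\mathbb Z\langle\gamma_i\colon z_i\ne0\rangle\subset L$, so $L^*\subset L^*_{\mathbf z}$ and $L^*_{\mathbf z}/L^*\subset\mathbb R^{m-n}/L^*=T_\Gamma$. Nondegenerate means the gradients of the $m-n$ defining functions are linearly independent at every point of $\mathcal Z_{\Gamma,\delta}$. *)

From mathcomp Require Import all_boot all_order all_algebra.
From mathcomp Require Import all_classical all_reals all_analysis.
From mathcomp Require Import complex.
Set Implicit Arguments. Unset Strict Implicit. Unset Printing Implicit Defensive.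
Import Order.TTheory GRing.Theory Num.Theory.
Local Open Scope ring_scope.
Local Open Scope classical_set_scope.

Section Defs.
Variable R : realType.

Definition dotv (d : nat) (u v : 'rV[R]_d) : R := \sum_(j < d) u 0 j * v 0 j.

Definition Zspan_on (m d : nat) (gamma : 'I_m -> 'rV[R]_d) (P : pred 'I_m)
  : set 'rV[R]_d :=
  [set v | exists c : 'I_m -> int, v = \sum_(k < m | P k) (gamma k) *~ (c k)].

Definition Zspan (m d : nat) (gamma : 'I_m -> 'rV[R]_d) := Zspan_on gamma predT.

Definition Zspan_lattice_of_rank (m d : nat) (gamma : 'I_m -> 'rV[R]_d)
  (r : nat) : Prop :=
  (exists2 eps : R, 0 < eps &
     forall v, Zspan gamma v -> v != 0 -> eps <= `|v|) /\
  \rank (\matrix_(k < m, j < d) gamma k 0 j) = r.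

Definition dual_grp (d : nat) (M : set 'rV[R]_d) : set 'rV[R]_d :=
  [set l | forall v, M v -> exists z : int, dotv l v = z%:~R].

Definition L_of (m d : nat) (gamma : 'I_m -> 'rV[R]_d) (z : 'rV[R[i]]_m) :=
  Zspan_on gamma (fun k => z 0 k != 0).

Definition csq (w : R[i]) : R := (complex.Re w) ^+ 2 + (complex.Im w) ^+ 2.

Definition Zset (m d : nat) (gamma : 'I_m -> 'rV[R]_d) (delta : 'rV[R]_d)
  : set 'rV[R[i]]_m :=
  [set z | forall j : 'I_d, \sum_(k < m) gamma k 0 j * csq (z 0 k) = delta 0 j].

Definition expi (theta : R) : R[i] := (cos theta +i* sin theta)%C.

Definition torus_map (m d : nat) (gamma : 'I_m -> 'rV[R]_d) (phi : 'rV[R]_d)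
  : 'rV[R[i]]_m :=
  \row_(k < m) expi (2 * pi * dotv (gamma k) phi).

Definition torus (m d : nat) (gamma : 'I_m -> 'rV[R]_d) : set 'rV[R[i]]_m :=
  range (torus_map gamma).

Definition tact (m : nat) (t z : 'rV[R[i]]_m) : 'rV[R[i]]_m :=
  \row_(k < m) (t 0 k * z 0 k).

Definition stabiliserT (m d : nat) (gamma : 'I_m -> 'rV[R]_d) (z : 'rV[R[i]]_m)
  : set 'rV[R[i]]_m :=
  [set t | torus gamma t /\ tact t z = z].

Definition realify (m : nat) (z : 'rV[R[i]]_m) : 'rV[R]_(m + m) :=
  row_mx (\row_(k < m) complex.Re (z 0 k)) (\row_(k < m) complex.Im (z 0 k)).

Definition deffun (m d : nat) (gamma : 'I_m -> 'rV[R]_d) (delta : 'rV[R]_d)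
  (j : 'I_d) (x : 'rV[R]_(m + m)) : R :=
  \sum_(k < m) gamma k 0 j * (x 0 (lshift m k) ^+ 2 + x 0 (rshift m k) ^+ 2)
  - delta 0 j.

Definition grad (N : nat) (f : 'rV[R]_N -> R) (x : 'rV[R]_N) : 'rV[R]_N :=
  \row_(i < N) ('D_('e_i) f x).

Definition nondegenerateZ (m d : nat) (gamma : 'I_m -> 'rV[R]_d)
  (delta : 'rV[R]_d) : Prop :=
  forall z, Zset gamma delta z ->
    row_free (\matrix_(j < d, i < m + m) grad (deffun gamma delta j) (realify z) 0 i).

End Defs.

From HB Require Import structures.
From mathcomp Require Import all_boot all_order all_algebra.
From mathcomp Require Import all_classical all_reals all_analysis.
From mathcomp Require Import complex.
From mathcomp Require Import ring lra.
Import Order.TTheory GRing.Theory Num.Theory numFieldNormedType.Exports.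
Local Open Scope ring_scope.
Local Open Scope classical_set_scope.
Set Implicit Arguments. Unset Strict Implicit. Unset Printing Implicit Defensive.

(* A torus element [torus_map gamma phi] fixes [z] exactly when
   [e^{2 pi i <gamma_k, phi>} = 1], i.e. [<gamma_k, phi>] is an integer, for
   every [k] with [z_k <> 0]; this says [phi] lies in the dual of [L_z].

   For finiteness, the gradient matrix of the defining functions at [z]
   factors as [Gamma_z^T J], where [Gamma_z] keeps the rows [gamma_k] with
   [z_k <> 0] and [J] is the Jacobian of the moment map [z |-> (|z_k|^2)_k].
   Nondegeneracy thus makes [Gamma_z] of full rank, so every [gamma_k] is a
   real combination of the [gamma_i] with [z_i <> 0].  Since [L] is discrete,
   Dirichlet's simultaneous approximation yields [N > 0] with [N gamma_k] in
   [L_z] for all [k]; hence every stabilising [t] satisfies [t_k^N = 1], which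
   leaves finitely many choices. *)

Section Expi.
Variable R : realType.

Lemma expiD (x y : R) : expi (x + y) = expi x * expi y.
Proof.
by rewrite /expi sinD cosD /GRing.mul /= /mulc /=; congr Complex; rewrite addrC.
Qed.

Lemma expiN (x : R) : expi (- x) = (expi x)^*%C.
Proof. by rewrite /expi cosN sinN. Qed.

Lemma expi_2pi_int (x : R) : x \is a Num.int -> expi (2 * pi * x) = 1.
Proof.
have expi_2pi_nat (k : nat) : expi (2 * pi * k%:R : R) = 1.
  have := periodicn (@cosD2pi R) k 0; have := periodicn (@sinD2pi R) k 0.
  rewrite !add0r cos0 sin0 => s c.
  by rewrite /expi mulr_natl mulr_natr c s.
move=> /intrP[[k|k] ->]; first exact: expi_2pi_nat.
by rewrite NegzE rmorphN /= mulrN expiN expi_2pi_nat conjc1.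
Qed.

Lemma cos_2pi_eq1 (y : R) : 0 <= y < 1 -> cos (2 * pi * y) = 1 -> y = 0.
Proof.
move=> /andP[y0 y1] cy; have pi0 : 0 < pi :> R := pi_gt0 R.
suff : 2 * pi * y = 0 by nra.
have [ypi|piy] := leP (2 * pi * y) pi.
  by apply: cos_inj; rewrite ?in_itv /= ?ypi ?cy ?cos0 //; nra.
have : pi *+ 2 - 2 * pi * y = 0.
  apply: cos_inj; rewrite ?in_itv /= ?lexx ?ltW //; try by rewrite mulr2n; nra.
  by rewrite cos0 addrC cosD2pi cosN.
by rewrite mulr2n => ?; nra.
Qed.

Lemma expi_2pi_eq1 (x : R) : expi (2 * pi * x) = 1 -> x \is a Num.int.
Proof.
move=> ex; have /andP[floor_le floor_gt] := floor_itv x.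
suff : x - (Num.floor x)%:~R = 0.
  by move/eqP; rewrite subr_eq0 => /eqP ->; apply: intr_int.
apply: cos_2pi_eq1.
  by move: floor_gt; rewrite intrD => ?; apply/andP; split; lra.
have : expi (2 * pi * (x - (Num.floor x)%:~R)) = 1.
  by rewrite mulrBr -mulrN expiD ex mul1r expi_2pi_int // rpredN intr_int.
by rewrite /expi => -[].
Qed.

Lemma expi_2pi_root (N : nat) (x : R) : (0 < N)%N -> x *+ N \is a Num.int ->
  exists r : 'I_N, expi (2 * pi * x) = expi (2 * pi * (r%:R / N%:R)).
Proof.
move=> N0 /intrP[n xN].
have NR : (N%:R : R) != 0 by rewrite pnatr_eq0 -lt0n.
have r0 : 0 <= (n %% N)%Z by rewrite modz_ge0 // eqz_nat -lt0n.
have rN : (`|(n %% N)%Z|%N < N)%N by rewrite -ltz_nat gez0_abs // ltz_pmod.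
exists (Ordinal rN).
have -> : x = (n %/ N)%Z%:~R + (n %% N)%Z%:~R / N%:R.
  apply: (mulIf NR); rewrite mulr_natr xN mulrDl divfK //.
  by rewrite {1}(divz_eq n N) intrD intrM.
by rewrite mulrDr expiD expi_2pi_int ?intr_int // mul1r /= natr_absz ger0_norm.
Qed.

End Expi.

Section Stabiliser.
Variable R : realType.

Lemma dotvC d (u v : 'rV[R]_d) : dotv u v = dotv v u.
Proof. by apply: eq_bigr => j _; rewrite mulrC. Qed.

Lemma dotv_is_zmod_morphism d (l : 'rV[R]_d) : zmod_morphism (dotv l).
Proof.
by move=> u v; rewrite /dotv -sumrB; apply: eq_bigr => j _; rewrite !mxE mulrBr.
Qed.

HB.instance Definition _ d (l : 'rV[R]_d) :=
  GRing.isZmodMorphism.Build 'rV[R]_d R (dotv l) (@dotv_is_zmod_morphism d l).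

Lemma Zspan_on_gen m d (gamma : 'I_m -> 'rV[R]_d) (P : pred 'I_m) k :
  P k -> Zspan_on gamma P (gamma k).
Proof.
move=> Pk; exists (fun i => (i == k)%:Z).
rewrite (bigD1 k) //= eqxx big1 ?addr0 // => i /andP[_ /negbTE ->].
by rewrite mulr0z.
Qed.

Lemma dual_Zspan_onP m d (gamma : 'I_m -> 'rV[R]_d) (P : pred 'I_m) l :
  dual_grp (Zspan_on gamma P) l <->
  forall k, P k -> dotv l (gamma k) \is a Num.int.
Proof.
split=> [dual_l k Pk | gamma_int v [c ->]].
  by have [z ->] := dual_l _ (Zspan_on_gen gamma Pk); apply: intr_int.
apply/intrP; rewrite raddf_sum rpred_sum // => k Pk.
by rewrite raddfMz rpredMz ?gamma_int.
Qed.

Lemma tact_torus_mapP m d (gamma : 'I_m -> 'rV[R]_d) phi z :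
  tact (torus_map gamma phi) z = z <->
  forall k, z 0 k != 0 -> dotv phi (gamma k) \is a Num.int.
Proof.
split=> [fix_z k zk | gamma_int].
  apply: expi_2pi_eq1; rewrite dotvC; apply: (mulIf zk).
  by move/rowP: fix_z => /(_ k); rewrite !mxE mul1r.
apply/rowP => k; rewrite !mxE.
have [-> | zk] := eqVneq (z 0 k) 0; first by rewrite mulr0.
by rewrite dotvC expi_2pi_int ?gamma_int // mul1r.
Qed.

Lemma stabiliserTE m d (gamma : 'I_m -> 'rV[R]_d) z :
  stabiliserT gamma z = torus_map gamma @` dual_grp (L_of gamma z).
Proof.
apply/seteqP; split=> [t [[phi _ <-] /tact_torus_mapP fix_z] | t [phi dual_phi <-]].
  by exists phi => //; apply/dual_Zspan_onP.
by split; [exists phi | apply/tact_torus_mapP/dual_Zspan_onP].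
Qed.

End Stabiliser.

Section Gradient.
Variable R : realType.

Lemma is_derive_coord N (l : 'I_N) (x v : 'rV[R]_N) :
  is_derive x v (fun y : 'rV[R]_N => y 0 l) (v 0 l).
Proof.
have L : (fun h : R => h^-1 *: (((fun y : 'rV[R]_N => y 0 l) \o shift x) (h *: v) - x 0 l))
   @ 0^' --> v 0 l.
  apply: (@cvg_trans _ ((fun _ : R => v 0 l) @ 0^')); last exact: cvg_cst.
  apply: near_eq_cvg; near=> h.
  rewrite /= !mxE addrK /GRing.scale /= mulrA mulVf ?mul1r //.
  near: h; exact: nbhs_dnbhs_neq.
apply: DeriveDef; first by apply/cvg_ex; exists (v 0 l).
exact: cvg_lim L.
Unshelve. all: by end_near.
Qed.

Lemma derive_deffun m d (gamma : 'I_m -> 'rV[R]_d) (delta : 'rV[R]_d) j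
  (x v : 'rV[R]_(m + m)) :
  'D_v (deffun gamma delta j) x =
  \sum_(k < m) gamma k 0 j * ((x 0 (lshift m k) * v 0 (lshift m k)) *+ 2
                             + (x 0 (rshift m k) * v 0 (rshift m k)) *+ 2).
Proof.
pose p l := fun y : 'rV[R]_(m + m) => y 0 l.
have -> : deffun gamma delta j =
  \sum_(k < m) (gamma k 0 j *: (p (lshift m k) ^+ 2 + p (rshift m k) ^+ 2))
  - cst (delta 0 j).
  by apply/funext => y; rewrite /deffun /= fct_sumE.
have D k : is_derive x v (gamma k 0 j *: (p (lshift m k) ^+ 2 + p (rshift m k) ^+ 2))
   (gamma k 0 j *: ((2%:R * p (lshift m k) x ^+ 1) *: v 0 (lshift m k)
                   + (2%:R * p (rshift m k) x ^+ 1) *: v 0 (rshift m k))).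
  by apply/is_deriveZ/is_deriveD; apply: is_deriveX; apply: is_derive_coord.
have Dsum := is_deriveB (is_derive_sum D) (is_derive_cst (delta 0 j) x v).
rewrite (@derive_val _ _ _ _ _ _ _ Dsum) subr0; apply: eq_bigr => k _ /=.
by rewrite /p /GRing.scale /= !expr1 -!mulrA !mulr_natl.
Qed.

End Gradient.

Section Nondegenerate.
Variable R : realType.

Definition gamma_mx_on m d (gamma : 'I_m -> 'rV[R]_d) (P : pred 'I_m) : 'M[R]_(m, d) :=
  \matrix_(k, j) (if P k then gamma k 0 j else 0).

Lemma row_full_gamma_mx_on m d (gamma : 'I_m -> 'rV[R]_d) (P : pred 'I_m)
    (v : 'rV[R]_d) :
  row_full (gamma_mx_on gamma P) ->
  exists c : 'I_m -> R, v = \sum_(i | P i) c i *: gamma i.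
Proof.
move=> /(submx_full v) /submxP[c ->]; exists (fun i => c 0 i).
rewrite mulmx_sum_row [RHS]big_mkcond /=; apply: eq_bigr => i _.
have -> : row i (gamma_mx_on gamma P) = if P i then gamma i else 0.
  by apply/rowP => j; rewrite !mxE; case: (P i); rewrite ?mxE.
by case: (P i); rewrite ?scaler0.
Qed.

(* Jacobian, in the real coordinates [realify z], of the moment map
   [z |-> (|z_1|^2, ..., |z_m|^2)]. *)
Definition moment_jacobian m (z : 'rV[R[i]]_m) : 'M[R]_(m, m + m) :=
  \matrix_(k, i)
    ((complex.Re (z 0 k) * ('e_i : 'rV[R]_(m + m)) 0 (lshift m k)) *+ 2
   + (complex.Im (z 0 k) * ('e_i : 'rV[R]_(m + m)) 0 (rshift m k)) *+ 2).

Lemma grad_deffun_mx m d (gamma : 'I_m -> 'rV[R]_d) (delta : 'rV[R]_d) z :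
  \matrix_(j < d, i < m + m) grad (deffun gamma delta j) (realify z) 0 i =
  (gamma_mx_on gamma (fun k => z 0 k != 0))^T *m moment_jacobian z.
Proof.
apply/matrixP => j i; rewrite !mxE derive_deffun; apply: eq_bigr => k _.
rewrite /realify row_mxEl row_mxEr !mxE.
by have [->|_] := eqVneq (z 0 k) 0; rewrite ?mul0r ?mul0rn ?addr0 ?mulr0.
Qed.

Lemma nondegenerate_row_full m d (gamma : 'I_m -> 'rV[R]_d) delta z :
  nondegenerateZ gamma delta -> Zset gamma delta z ->
  row_full (gamma_mx_on gamma (fun k => z 0 k != 0)).
Proof.
move=> nondeg /nondeg; rewrite /row_free /row_full grad_deffun_mx => /eqP rk.
apply/eqP/anti_leq; rewrite rank_leq_col -{1}rk -[X in (_ <= X)%N]mxrank_tr.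
exact: mxrankM_maxl.
Qed.

End Nondegenerate.

Section Dirichlet.
Variable R : realType.

Definition fract (x : R) : R := x - (Num.floor x)%:~R.

Lemma fract_itv (x : R) : 0 <= fract x < 1.
Proof.
have /andP[floor_le floor_gt] := floor_itv x.
by move: floor_gt; rewrite /fract intrD => ?; apply/andP; split; lra.
Qed.

Lemma truncn_eq_dist (x y : R) : 0 <= x -> 0 <= y -> Num.truncn x = Num.truncn y ->
  `|x - y| < 1.
Proof.
move=> /truncn_itv/andP[x1 x2] /truncn_itv/andP[y1 y2] exy.
by move: x1 x2; rewrite exy => x1 x2; rewrite ltr_norml; apply/andP; split; lra.
Qed.

Definition fract_box (K : nat) (u : R) : 'I_K.+1 := inord (Num.truncn (K.+1%:R * u)).

Lemma fract_box_close (K : nat) (u v : R) : 0 <= u < 1 -> 0 <= v < 1 ->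
  fract_box K u = fract_box K v -> `|u - v| < K.+1%:R^-1.
Proof.
have K0 : 0 < K.+1%:R :> R by [].
have box_val w : 0 <= w < 1 -> (fract_box K w : nat) = Num.truncn (K.+1%:R * w).
  move=> /andP[w0 w1]; rewrite /fract_box inordK // ltnS truncn_le_nat.
  by rewrite -[X in _ < X]mulr1 ltr_pM2l.
move=> /[dup] /andP[u0 _] /box_val box_u /[dup] /andP[v0 _] /box_val box_v.
move=> /(congr1 (@nat_of_ord _)); rewrite box_u box_v.
move=> /(truncn_eq_dist (mulr_ge0 (ltW K0) u0) (mulr_ge0 (ltW K0) v0)).
by rewrite -mulrBr normrM gtr0_norm // -ltr_pdivlMl // mulr1.
Qed.

Lemma simultaneous_dirichlet (I : finType) (c : I -> R) (K : nat) :
  exists a b : nat, (a < b)%N /\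
    forall i, `|fract (b%:R * c i) - fract (a%:R * c i)| < K.+1%:R^-1.
Proof.
pose boxes (q : 'I_(K.+1 ^ #|I|).+1) := [ffun i => fract_box K (fract (q%:R * c i))].
have : ~~ injectiveb boxes.
  by apply/negP => /injectiveP /leq_card; rewrite card_ffun !card_ord ltnn.
move=> /injectivePn[q [q' neq_qq' /ffunP boxes_eq]].
have close (a b : 'I_(K.+1 ^ #|I|).+1) : boxes a = boxes b ->
    forall i, `|fract (b%:R * c i) - fract (a%:R * c i)| < K.+1%:R^-1.
  move=> /ffunP eq_ab i; apply: fract_box_close; rewrite ?fract_itv //.
  by have := eq_ab i; rewrite !ffunE.
have [lt_qq' | lt_q'q | eq_qq'] := ltngtP q q'.
- by exists q, q'; split => //; apply: close; apply/ffunP.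
- by exists q', q; split => //; apply: close; apply/ffunP => i; rewrite boxes_eq.
- by move: neq_qq'; rewrite (val_inj eq_qq') eqxx.
Qed.

End Dirichlet.

Section Lattice.
Variable R : realType.

Lemma discrete_Zspan_mulrn m d (gamma : 'I_m -> 'rV[R]_d) (P : pred 'I_m)
    (c : 'I_m -> 'I_m -> R) (eps : R) :
  0 < eps -> (forall v, Zspan gamma v -> v != 0 -> eps <= `|v|) ->
  (forall k, gamma k = \sum_(i < m | P i) c k i *: gamma i) ->
  exists2 N : nat, (0 < N)%N & forall k, Zspan_on gamma P (gamma k *+ N).
Proof.
move=> eps0 discrete span.
pose C := \sum_(i < m | P i) `|gamma i|.
have C0 : 0 <= C by apply: sumr_ge0 => i _.
pose K := Num.truncn (C / eps).
have KC : C * K.+1%:R^-1 < eps.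
  have /andP[_] := truncn_itv (divr_ge0 C0 (ltW eps0)).
  by rewrite -/K ltr_pdivrMr // mulrC ltr_pdivrMr.
have [a [b [lt_ab close]]] :=
  simultaneous_dirichlet (fun ki : 'I_m * 'I_m => c ki.1 ki.2) K.
exists (b - a)%N => [|k]; first by rewrite subn_gt0.
pose e i := Num.floor (b%:R * c k i) - Num.floor (a%:R * c k i).
exists e.
pose w := gamma k *+ (b - a) - \sum_(i < m | P i) gamma i *~ e i.
suff : w = 0 by move/eqP; rewrite subr_eq0 => /eqP.
have wL : Zspan gamma w.
  exists (fun i => (i == k)%:Z * (b - a)%:Z - (P i)%:Z * e i).
  rewrite (eq_bigr _ (fun i _ => mulrzBr _ _ _)) sumrB /w; congr (_ - _).
    rewrite (bigD1 k) //= eqxx mul1r big1 ?addr0 -?pmulrn // => i /negbTE ->.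
    by rewrite mul0r mulr0z.
  rewrite big_mkcond /=; apply: eq_bigr => i _.
  by case: (P i); rewrite ?mul1r ?mul0r ?mulr0z.
have wE : w = \sum_(i < m | P i) (fract (b%:R * c k i) - fract (a%:R * c k i)) *: gamma i.
  rewrite /w {1}span -scaler_nat scaler_sumr -sumrB; apply: eq_bigr => i _.
  rewrite scalerA -scaler_int -scalerBl /fract /e (natrB _ (ltnW lt_ab)) rmorphB.
  by congr (_ *: _); ring.
apply/eqP; apply: contraT => w_neq0.
suff : `|w| < eps by rewrite ltNge (discrete _ wL w_neq0).
rewrite wE; apply: le_lt_trans (ler_norm_sum _ _ _) (le_lt_trans _ KC).
rewrite /C mulr_suml; apply: ler_sum => i _.
rewrite normrZ mulrC ler_wpM2l // ltW //.
exact: (close (k, i)).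
Qed.

End Lattice.

Section Finite.
Variable R : realType.

Lemma stabiliserT_finite m d (gamma : 'I_m -> 'rV[R]_d) delta z :
  (exists2 eps : R, 0 < eps & forall v, Zspan gamma v -> v != 0 -> eps <= `|v|) ->
  nondegenerateZ gamma delta -> Zset gamma delta z ->
  finite_set (stabiliserT gamma z).
Proof.
move=> [eps eps0 discrete] nondeg Zz.
have /row_full_gamma_mx_on span := nondegenerate_row_full nondeg Zz.
have [c {}span] := fin_all_exists (fun k => span (gamma k)).
have [N N0 NL] := discrete_Zspan_mulrn eps0 discrete span.
pose root_vec (r : {ffun 'I_m -> 'I_N}) : 'rV[R[i]]_m :=
  \row_k expi (2 * pi * ((r k)%:R / N%:R) : R).
apply: (@sub_finite_set _ _ (root_vec @` setT)); last exact: finite_image finite_finset.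
move=> t; rewrite stabiliserTE => -[phi dual_phi <-].
have root k : exists r : 'I_N, torus_map gamma phi 0 k = expi (2 * pi * (r%:R / N%:R) : R).
  rewrite mxE; apply: expi_2pi_root N0 _.
  by have [n] := dual_phi _ (NL k); rewrite raddfMn dotvC => ->; apply: intr_int.
have [r rE] := fin_all_exists root.
by exists [ffun k => r k] => //; apply/rowP => k; rewrite mxE ffunE rE.
Qed.

End Finite.

Theorem lemma5p4 (R : realType) (m n : nat)
  (gamma : 'I_m -> 'rV[R]_(m - n)) (delta : 'rV[R]_(m - n)) :
  Zspan_lattice_of_rank gamma (m - n) ->
  (forall z, Zset gamma delta z ->
     stabiliserT gamma z = torus_map gamma @` dual_grp (L_of gamma z)) /\
  (nondegenerateZ gamma delta ->
     forall z, Zset gamma delta z -> finite_set (stabiliserT gamma z)).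
Proof.
move=> [discrete _]; split=> [z _ | nondeg z Zz]; first exact: stabiliserTE.
exact: stabiliserT_finite discrete nondeg Zz.
Qed.
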